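(* Let $V$ be a homogeneous degree-$d$ divergence-free vector field on $\mathbf{C}^3$ not vanishing on $\mathbf{C}^3\setminus\{0\}$, with induced foliation $\mathcal{F}$ of $\mathbf{P}^2_{\mathbf{C}}$ and real field $W$. Let $p\in\mathbf{C}^3\setminus\{0\}$ with $p\cdot V(p)=0$, so that $b=\Pi(p)$ is a zero of $W$ on the regular part of $\mathcal{F}$. Then, for the restriction of $W$ to the leaf of $\mathcal{F}$ through $b$, the zero $b$: (1) is a sink if and only if $\|V(p)\|^2>|DV(V)(p)\cdot p|$; (2) is a saddle if and only if $\|V(p)\|^2<|DV(V)(p)\cdot p|$; (3) is never a source.
   Context: $\Pi:\mathbf{C}^3\setminus\{0\}\to\mathbf{P}^2_{\mathbf{C}}$ is the quotient map, $p\cdot p'=x\bar x'+y\bar y'+z\bar z'$ the standard Hermitian product, $\|\cdot\|$ its norm. Writing $V=\sum_{k\in\{x,y,z\}}V_k\,\partial_k$, $DV(V)$ is the vector field with components $DV(V)_k=\sum_{l\in\{x,y,z\}}V_l\,\partial V_k/\partial l$. The real field $W$ is the projection to $\mathbf{P}^2_{\mathbf{C}}$ of the real vector field $\mathrm{Re}(\tilde\rho V)$ with $\tilde\rho(p)=-2(p\cdot V(p))/\|p\|^{2d}$ (the leafwise gradient of $-\log\|p\|^2$ for the leafwise metric $\tilde g_p(V(p))=\|p\|^{2d-2}$). A zero is a sink (resp. source) if all eigenvalues of the linearization have negative (resp. positive) real part, and a saddle if the real parts are nonzero with some of opposite signs. *)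

From mathcomp Require Import all_boot all_order all_algebra.
From mathcomp Require Import all_classical all_reals all_analysis.
From mathcomp Require Import complex.
From mathcomp Require mpoly.

Set Implicit Arguments.
Unset Strict Implicit.
Unset Printing Implicit Defensive.

Import Order.TTheory GRing.Theory Num.Theory.
Local Open Scope ring_scope.

Section Defs.
Variable R : realType.
Local Notation C := (R[i]).

Definition rc (x : R) : C := Complex x 0.

Definition C3 := 'I_3 -> C.

Definition hdot (p p' : C3) : C := \sum_(k < 3) p k * Num.conj (p' k).

Definition nsq (p : C3) : C := hdot p p.

(* a polynomial vector field V = sum_k V_k d/dk on C^3 *)
Definition pvf := 'I_3 -> mpoly.mpoly 3 C.

Definition evf (V : pvf) (z : C3) : C3 := fun k => mpoly.meval z (V k).

(* homogeneous of degree d: every monomial in the support of each V_k has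
   total degree d (this is the unfolding of mpoly's  V k \is d.-homog ,
   whose notation cannot be Imported alongside mathcomp-analysis) *)
Definition homogeneous_vf (d : nat) (V : pvf) : Prop :=
  forall k, all [pred m | mpoly.mdeg m == d] (mpoly.msupp (V k)).

Definition divergence_free (V : pvf) : Prop :=
  \sum_(k < 3) mpoly.mderiv k (V k) = 0.

Definition nonvanishing_off0 (V : pvf) : Prop :=
  forall z : C3, ~ (forall k, z k = 0) -> ~ (forall k, evf V z k = 0).

Definition DVV (V : pvf) (z : C3) : C3 :=
  fun k => \sum_(l < 3) evf V z l * mpoly.meval z (mpoly.mderiv l (V k)).

Definition rho (d : nat) (V : pvf) (z : C3) : C :=
  - 2%:R * hdot z (evf V z) / (nsq z) ^+ d.

(* The real vector field Re(rho~ V) on C^3 \ {0}, identified (C^3 = R^6) with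
   the complex vector rho~(z) V(z). *)
Definition Xfield (d : nat) (V : pvf) (z : C3) : C3 :=
  fun k => rho d V z * evf V z k.

(* Affine chart of P^2 centred at b = Pi(p):  the point q of the complex plane
   p^perp = {q | q . p = 0} corresponds to Pi(p + q); its inverse is
   psi_p(z) = (||p||^2 / (z . p)) z - p.  The differential of the holomorphic
   map psi_p at z, applied to v, is  Dpsi_p(z)[v] below. *)
Definition Dpsi (p z v : C3) : C3 :=
  fun k => nsq p * (v k / hdot z p - z k * hdot v p / (hdot z p) ^+ 2).

(* W = Pi_*(Re(rho~ V)) read in the chart at b: at the chart point q it is
   Dpsi_p(p+q)[X(p+q)]. *)
Definition Wchart (d : nat) (V : pvf) (p q : C3) : C3 :=
  Dpsi p (p + q) (Xfield d V (p + q)).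

Definition cderive (f : R -> C) (s : R) : C :=
  Complex (derive1 (fun t => @complex.Re R (f t)) s) (derive1 (fun t => @complex.Im R (f t)) s).

Definition rscale (s : R) (w : C3) : C3 := fun k => rc s * w k.

(* linearization at the chart origin (i.e. at b) of W in the chart,
   applied to the (real) tangent vector w *)
Definition linW (d : nat) (V : pvf) (p w : C3) : C3 :=
  fun k => cderive (fun s => Wchart d V p (rscale s w) k) 0.

(* tangent vector at b of the leaf through b, in the chart: Pi_* V(p) *)
Definition leaf_tangent (V : pvf) (p : C3) : C3 := Dpsi p p (evf V p).

(* M (a real 2x2 matrix) is the matrix, in the real basis (v, i v) of the
   tangent plane T_b L = C v of the leaf L through b, of the linearization of
   the restriction of W to L at its zero b (= restriction of the linearization
   of W to the invariant plane T_b L). *)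
Definition leaf_linearization (d : nat) (V : pvf) (p : C3) (M : 'M[R]_2) : Prop :=
  let v := leaf_tangent V p in
  let iv := fun k => 'i * v k in
  (forall k, linW d V p v k = rc (M 0 0) * v k + rc (M 1 0) * iv k) /\
  (forall k, linW d V p iv k = rc (M 0 1) * v k + rc (M 1 1) * iv k).

Definition cmx (M : 'M[R]_2) : 'M[C]_2 := map_mx (rc) M.

Definition is_sink_mx (M : 'M[R]_2) : Prop :=
  forall l : C, eigenvalue (cmx M) l -> @complex.Re R l < 0.
Definition is_source_mx (M : 'M[R]_2) : Prop :=
  forall l : C, eigenvalue (cmx M) l -> 0 < @complex.Re R l.
Definition is_saddle_mx (M : 'M[R]_2) : Prop :=
  (forall l : C, eigenvalue (cmx M) l -> @complex.Re R l != 0) /\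
  (exists l : C, eigenvalue (cmx M) l /\ @complex.Re R l < 0) /\
  (exists l : C, eigenvalue (cmx M) l /\ 0 < @complex.Re R l).

Definition leaf_sink d V p : Prop :=
  exists M, leaf_linearization d V p M /\ is_sink_mx M.
Definition leaf_saddle d V p : Prop :=
  exists M, leaf_linearization d V p M /\ is_saddle_mx M.
Definition leaf_source d V p : Prop :=
  exists M, leaf_linearization d V p M /\ is_source_mx M.

End Defs.

From mathcomp Require Import all_boot all_order all_algebra.
From mathcomp Require Import all_classical all_reals all_analysis.
From mathcomp Require Import complex.
From mathcomp Require mpoly.
From mathcomp Require Import ring lra.
Import Order.TTheory GRing.Theory Num.Theory.
Import (canonicals, coercions) mpoly.
Set Implicit Arguments.
Unset Strict Implicit.
Unset Printing Implicit Defensive.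
Local Open Scope ring_scope.

(* At the zero b the factor p.V(p) of rho~ vanishes, so the linearization of
   W at b along w is the derivative of z.V(z) along w, times -2/||p||^(2d),
   times the chart image of V(p), which is V(p) itself.  On the leaf tangent
   line C V(p) this is the real-linear map
     lambda |-> c (lambda ||V(p)||^2 + conj lambda conj B),
   with c = -2/||p||^(2d) < 0 and B = DV(V)(p).p.  Its matrix in the basis
   (V(p), i V(p)) is real symmetric with eigenvalues c (||V(p)||^2 +- |B|):
   the first is always negative, the second is negative iff |B| < ||V(p)||^2. *)

Section ComplexDerivative.
Variable R : realType.
Local Notation C := R[i].
Local Notation Re := (@complex.Re R).
Local Notation Im := (@complex.Im R).
Implicit Types (f g : R -> C) (a b c : C) (x : R).

Lemma ReD a b : Re (a + b) = Re a + Re b.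
Proof. by case: a => ? ?; case: b => ? ?. Qed.

Lemma ImD a b : Im (a + b) = Im a + Im b.
Proof. by case: a => ? ?; case: b => ? ?. Qed.

Lemma ReM a b : Re (a * b) = Re a * Re b - Im a * Im b.
Proof. by case: a => ? ?; case: b => ? ?. Qed.

Lemma ImM a b : Im (a * b) = Re a * Im b + Im a * Re b.
Proof. by case: a => ? ?; case: b => ? ?. Qed.

Lemma ReJ a : Re a^* = Re a.
Proof. by case: a => ? ?. Qed.

Lemma ImJ a : Im a^* = - Im a.
Proof. by case: a => ? ?. Qed.

Lemma ReV a : Re a^-1 = Re a / (Re a ^+ 2 + Im a ^+ 2).
Proof. by case: a => ? ?. Qed.

Lemma ImV a : Im a^-1 = - Im a / (Re a ^+ 2 + Im a ^+ 2).
Proof. by case: a => ? ? /=; rewrite mulNr. Qed.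

Lemma normc2_eq0 a : (Re a ^+ 2 + Im a ^+ 2 == 0) = (a == 0).
Proof.
case: a => u v /=; rewrite paddr_eq0 ?sqr_ge0 // !sqrf_eq0.
by apply/andP/eqP => [[/eqP -> /eqP ->] | [-> ->]].
Qed.

Definition is_cderive x f c :=
  is_derive x 1 (fun s => Re (f s)) (Re c) /\ is_derive x 1 (fun s => Im (f s)) (Im c).

Definition cderivable x f := exists c, is_cderive x f c.

Lemma cderive_val x f c : is_cderive x f c -> cderive f x = c.
Proof. by case: c => u v [du dv]; rewrite /cderive !derive1E !derive_val. Qed.

Lemma is_cderive_cst x a : is_cderive x (fun _ => a) 0.
Proof. by split; exact: is_derive_cst. Qed.

Lemma is_cderive_scale x a : is_cderive x (fun s => rc s * a) a.
Proof.
have lin (u : R) : is_derive x 1 (fun s => s * u) u.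
  by apply: is_derive_eq; rewrite scaler0 add0r; exact: mulr1.
split; first by under eq_fun do rewrite ReM /= mul0r subr0.
by under eq_fun do rewrite ImM /= mul0r addr0.
Qed.

Lemma is_cderiveD x f g a b :
  is_cderive x f a -> is_cderive x g b -> is_cderive x (fun s => f s + g s) (a + b).
Proof.
move=> [fa1 fa2] [gb1 gb2]; rewrite /is_cderive ReD ImD.
by split; [under eq_fun do rewrite ReD | under eq_fun do rewrite ImD]; exact: is_deriveD.
Qed.

Lemma is_cderiveM x f g a b : is_cderive x f a -> is_cderive x g b ->
  is_cderive x (fun s => f s * g s) (a * g x + f x * b).
Proof.
move=> [fa1 fa2] [gb1 gb2]; split.
  under eq_fun do rewrite ReM.
  apply: is_derive_eq; rewrite ReD !ReM /GRing.scale /=; ring.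
under eq_fun do rewrite ImM.
apply: is_derive_eq; rewrite ImD !ImM /GRing.scale /=; ring.
Qed.

Lemma is_cderiveJ x f a : is_cderive x f a -> is_cderive x (fun s => (f s)^*) a^*.
Proof.
move=> [fa1 fa2]; rewrite /is_cderive ReJ ImJ.
split; first by under eq_fun do rewrite ReJ.
by under eq_fun do rewrite ImJ; exact: is_deriveN.
Qed.

Lemma is_cderiveN x f a : is_cderive x f a -> is_cderive x (fun s => - f s) (- a).
Proof.
move=> fa; have := is_cderiveM (is_cderive_cst x (-1)) fa.
rewrite mul0r add0r mulN1r.
by have -> : (fun s => -1 * f s) = (fun s => - f s) by apply/funext => s; rewrite mulN1r.
Qed.

Lemma is_cderiveB x f g a b :
  is_cderive x f a -> is_cderive x g b -> is_cderive x (fun s => f s - g s) (a - b).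
Proof. by move=> fa gb; exact: is_cderiveD fa (is_cderiveN gb). Qed.

Lemma is_cderive_sum x n (F : 'I_n -> R -> C) (a : 'I_n -> C) :
  (forall i, is_cderive x (F i) (a i)) ->
  is_cderive x (fun s => \sum_(i < n) F i s) (\sum_(i < n) a i).
Proof.
elim: n F a => [|n IHn] F a Fa.
  by rewrite big_ord0; under eq_fun do rewrite big_ord0; exact: is_cderive_cst.
rewrite big_ord_recr; under eq_fun do rewrite big_ord_recr.
by apply: is_cderiveD (Fa ord_max); apply: IHn => i; exact: Fa.
Qed.

Lemma cderivable_cst x a : cderivable x (fun _ => a).
Proof. by exists 0; exact: is_cderive_cst. Qed.

Lemma cderivableB x f g :
  cderivable x f -> cderivable x g -> cderivable x (fun s => f s - g s).
Proof. by move=> [a fa] [b gb]; exists (a - b); exact: is_cderiveB. Qed.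

Lemma cderivableM x f g :
  cderivable x f -> cderivable x g -> cderivable x (fun s => f s * g s).
Proof. by move=> [a fa] [b gb]; eexists; exact: is_cderiveM fa gb. Qed.

Lemma cderivableJ x f : cderivable x f -> cderivable x (fun s => (f s)^*).
Proof. by move=> [a fa]; exists a^*; exact: is_cderiveJ. Qed.

Lemma cderivableX x f n : cderivable x f -> cderivable x (fun s => f s ^+ n).
Proof.
move=> df; elim: n => [|n IHn].
  by under eq_fun do rewrite expr0; exact: cderivable_cst.
by under eq_fun do rewrite exprS; exact: cderivableM.
Qed.

Lemma cderivable_sum x n (F : 'I_n -> R -> C) :
  (forall i, cderivable x (F i)) -> cderivable x (fun s => \sum_(i < n) F i s).
Proof.
move=> dF; have /all_sig [a Fa] : forall i, {c | is_cderive x (F i) c}.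
  by move=> i; apply: cid; exact: dF.
by exists (\sum_i a i); exact: is_cderive_sum.
Qed.

Lemma cderivableP x f : cderivable x f <->
  derivable (fun s => Re (f s)) x 1 /\ derivable (fun s => Im (f s)) x 1.
Proof.
split=> [[c [dRe dIm]] | [dRe dIm]].
  by split; [case: dRe | case: dIm].
exists (Complex ('D_1 (fun s => Re (f s)) x) ('D_1 (fun s => Im (f s)) x)).
by split; [exact: derivableP dRe | exact: derivableP dIm].
Qed.

Lemma cderivableV x f : cderivable x f -> f x != 0 -> cderivable x (fun s => (f s)^-1).
Proof.
move=> /cderivableP [dRe dIm] fx0.
pose u s := Re (f s); pose v s := Im (f s); pose n := u * u + v * v.
have n0 : n x != 0 by rewrite /n /= -!expr2 normc2_eq0.
have dnV : derivable (fun s => (n s)^-1) x 1.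
  exact: derivableV n0 (derivableD (derivableM dRe dRe) (derivableM dIm dIm)).
apply/cderivableP; split.
  have -> : (fun s => Re (f s)^-1) = u * (fun s => (n s)^-1).
    by apply/funext => s; rewrite ReV /= !expr2.
  exact: derivableM dRe dnV.
have -> : (fun s => Im (f s)^-1) = - (v * (fun s => (n s)^-1)).
  by apply/funext => s; rewrite ImV /= !expr2 mulNr.
exact: derivableN (derivableM dIm dnV).
Qed.

End ComplexDerivative.

Section PolynomialAlongLines.
Variable R : realType.
Local Notation C := R[i].
Implicit Types (z w : C3 R) (P Q : mpoly.mpoly 3 C).

Lemma addr_rscale0 z w : z + rscale 0 w = z.
Proof.
apply/funext => k; change (z k + rc 0 * w k = z k).
by rewrite (_ : rc 0 = 0) // mul0r addr0.
Qed.

Lemma is_cderive_line z w k : is_cderive 0 (fun s => (z + rscale s w) k) (w k).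
Proof.
have := is_cderiveD (is_cderive_cst 0 (z k)) (is_cderive_scale 0 (w k)).
by rewrite add0r.
Qed.

Definition line_derivative_spec P := forall z w,
  is_cderive 0 (fun s => mpoly.meval (z + rscale s w) P)
    (\sum_(l < 3) w l * mpoly.meval z (mpoly.mderiv l P)).

Lemma line_derivative_specD P Q :
  line_derivative_spec P -> line_derivative_spec Q -> line_derivative_spec (P + Q).
Proof.
move=> dP dQ z w; have := is_cderiveD (dP z w) (dQ z w).
rewrite -big_split /=; under eq_fun do rewrite -mpoly.mevalD.
by under eq_bigr do rewrite -mulrDr -mpoly.mevalD -mpoly.mderivD.
Qed.

Lemma line_derivative_specM P Q :
  line_derivative_spec P -> line_derivative_spec Q -> line_derivative_spec (P * Q).
Proof.
move=> dP dQ z w; have := is_cderiveM (dP z w) (dQ z w).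
rewrite !addr_rscale0 mulr_suml mulr_sumr -big_split /=.
under eq_fun do rewrite -mpoly.mevalM.
congr is_cderive; apply: eq_bigr => l _.
rewrite mpoly.mderivM mpoly.mevalD !mpoly.mevalM mulrDr -mulrA.
by congr (_ + _); exact: mulrCA.
Qed.

Lemma line_derivative_specZ c P : line_derivative_spec P -> line_derivative_spec (c *: P).
Proof.
move=> dP z w; have := is_cderiveM (is_cderive_cst 0 c) (dP z w).
rewrite mul0r add0r mulr_sumr; under eq_fun do rewrite -mpoly.mevalZ.
congr is_cderive; apply: eq_bigr => l _.
by rewrite mpoly.mderivZ mpoly.mevalZ; ring.
Qed.

Lemma line_derivative_spec1 : line_derivative_spec 1.
Proof.
move=> z w; under eq_fun do rewrite mpoly.meval1.
rewrite big1; first exact: is_cderive_cst.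
by move=> l _; rewrite -mpoly.mpolyC1 mpoly.mderivC mpoly.meval0 mulr0.
Qed.

Lemma line_derivative_specX (i : 'I_3) :
  line_derivative_spec (mpoly.mpolyX _ (mpoly.mnm1 i)).
Proof.
move=> z w; under eq_fun do rewrite mpoly.mevalXU.
rewrite (bigD1 i) //= big1 ?addr0 => [|l li].
  rewrite mpoly.mderivX mpoly.mevalZ mpoly.mevalX mpoly.mnm1E eqxx /=.
  rewrite big1 ?mulr1 => [|j _]; last by rewrite mpoly.mnmBE !mpoly.mnm1E subnn expr0.
  exact: is_cderive_line.
by rewrite mpoly.mderivX mpoly.mevalZ mpoly.mnm1E eq_sym (negbTE li) mul0r mulr0.
Qed.

Lemma is_cderive_meval P : line_derivative_spec P.
Proof.
elim/mpoly.mpolyind: P => [|c m P _ _ dP].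
  move=> z w; under eq_fun do rewrite mpoly.meval0.
  rewrite big1; first exact: is_cderive_cst.
  by move=> l _; rewrite mpoly.mderiv0 mpoly.meval0 mulr0.
apply: line_derivative_specD dP; apply: line_derivative_specZ.
rewrite mpoly.mpolyXE_id.
apply: (big_ind _ line_derivative_spec1 line_derivative_specM) => j _.
elim: (m j) => [|k IHk]; first by rewrite expr0; exact: line_derivative_spec1.
by rewrite exprS; apply: line_derivative_specM IHk; exact: line_derivative_specX.
Qed.

End PolynomialAlongLines.

Section HermitianProduct.
Variable R : realType.
Implicit Types (u v : C3 R) (x : R).

Lemma hdotC u v : hdot u v = (hdot v u)^*.
Proof.
rewrite /hdot rmorph_sum; apply: eq_bigr => k _.
by rewrite rmorphM /= conjCK mulrC.
Qed.

Lemma hdotZl c u v : hdot (fun k => c * u k) v = c * hdot u v.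
Proof. by rewrite /hdot mulr_sumr; apply: eq_bigr => k _; rewrite mulrA. Qed.

Lemma hdotZr c u v : hdot u (fun k => c * v k) = c^* * hdot u v.
Proof. by rewrite hdotC hdotZl rmorphM /= -hdotC. Qed.

Lemma is_cderive_hdot x (u v : R -> C3 R) (u' v' : C3 R) :
  (forall k, is_cderive x (fun s => u s k) (u' k)) ->
  (forall k, is_cderive x (fun s => v s k) (v' k)) ->
  is_cderive x (fun s => hdot (u s) (v s)) (hdot u' (v x) + hdot (u x) v').
Proof.
move=> du dv; rewrite /hdot -big_split; apply: is_cderive_sum => k.
exact: is_cderiveM (du k) (is_cderiveJ (dv k)).
Qed.

Lemma cderivable_hdot x (u v : R -> C3 R) :
  (forall k, cderivable x (fun s => u s k)) ->
  (forall k, cderivable x (fun s => v s k)) ->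
  cderivable x (fun s => hdot (u s) (v s)).
Proof.
move=> du dv; apply: cderivable_sum => k.
by apply: cderivableM; [exact: du | apply: cderivableJ; exact: dv].
Qed.

End HermitianProduct.

Lemma det_mx22 (F : comNzRingType) (A : 'M[F]_2) :
  \det A = A 0 0 * A 1 1 - A 0 1 * A 1 0.
Proof.
have l0 : lift 0 (0 : 'I_1) = 1 :> 'I_2 by apply/val_inj.
have l1 : lift 1 (0 : 'I_1) = 0 :> 'I_2 by apply/val_inj.
rewrite (expand_det_row _ 0) !big_ord_recl big_ord0 addr0 /cofactor !det_mx11 !mxE /=.
by rewrite !l0 l1 expr0 expr1 mul1r mulN1r mulrN.
Qed.

Lemma eigenvalue_mx22 (F : fieldType) (A : 'M[F]_2) a :
  eigenvalue A a = ((A 0 0 - a) * (A 1 1 - a) - A 0 1 * A 1 0 == 0).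
Proof.
rewrite /eigenvalue /eigenspace kermx_eq0 row_free_unit unitmxE unitfE negbK.
by rewrite det_mx22 !mxE /= !mulr1n !mulr0n !subr0.
Qed.

Section RealMatrixSpectrum.
Variable R : realType.

Lemma eigenvalue_cmx22 (M : 'M[R]_2) (l1 l2 : R) :
  M 0 0 + M 1 1 = l1 + l2 -> M 0 0 * M 1 1 - M 0 1 * M 1 0 = l1 * l2 ->
  forall l, eigenvalue (cmx M) l <-> l = rc l1 \/ l = rc l2.
Proof.
move=> tr det l; rewrite eigenvalue_mx22 /cmx !mxE.
have -> : (rc (M 0 0) - l) * (rc (M 1 1) - l) - rc (M 0 1) * rc (M 1 0) =
          (l - rc l1) * (l - rc l2).
  have -> : rc (M 0 1) * rc (M 1 0) = rc (M 0 0 * M 1 1 - l1 * l2).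
    by rewrite -det /rc /=; congr Complex; ring.
  have -> : M 1 1 = l1 + l2 - M 0 0 by rewrite -tr; ring.
  by case: l => u v; rewrite /rc /=; congr Complex; ring.
rewrite mulf_eq0 !subr_eq0.
by split=> [/orP[]/eqP|[]->]; [left|right|rewrite eqxx|rewrite eqxx orbT].
Qed.

Variables (M : 'M[R]_2) (l1 l2 : R).
Hypothesis spectrum : forall l, eigenvalue (cmx M) l <-> l = rc l1 \/ l = rc l2.

Let eig1 : eigenvalue (cmx M) (rc l1). Proof. by apply/spectrum; left. Qed.
Let eig2 : eigenvalue (cmx M) (rc l2). Proof. by apply/spectrum; right. Qed.

Lemma is_sink_mxE : is_sink_mx M <-> l1 < 0 /\ l2 < 0.
Proof.
split=> [sink | [l1_lt0 l2_lt0] l /spectrum [] ->] //.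
by split; [exact: sink _ eig1 | exact: sink _ eig2].
Qed.

Lemma is_source_mxE : is_source_mx M <-> 0 < l1 /\ 0 < l2.
Proof.
split=> [source | [l1_gt0 l2_gt0] l /spectrum [] ->] //.
by split; [exact: source _ eig1 | exact: source _ eig2].
Qed.

Lemma is_saddle_mxE : is_saddle_mx M <-> (l1 < 0 < l2) \/ (l2 < 0 < l1).
Proof.
split=> [[_ [[l [/spectrum eig_l l_lt0]] [l' [/spectrum eig_l' l'_gt0]]]] | sgn].
  by case: eig_l eig_l' l_lt0 l'_gt0 => -> [] -> /= neg pos; lra.
split; last by case: sgn => /andP[neg pos]; split;
  [exists (rc l1) | exists (rc l2) | exists (rc l2) | exists (rc l1)].
by move=> l /spectrum [] -> /=; apply/eqP; case: sgn => /andP[]; lra.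
Qed.

End RealMatrixSpectrum.

Section Chart.
Variable R : realType.
Variables (d : nat) (V : pvf R) (p : C3 R).
Implicit Types (z w : C3 R).

Definition dV z w : C3 R :=
  fun k => \sum_(l < 3) w l * mpoly.meval z (mpoly.mderiv l (V k)).

Lemma is_cderive_evf z w k :
  is_cderive 0 (fun s => evf V (z + rscale s w) k) (dV z w k).
Proof. exact: is_cderive_meval. Qed.

Lemma is_cderive_hdot_evf z w :
  is_cderive 0 (fun s => hdot (z + rscale s w) (evf V (z + rscale s w)))
    (hdot w (evf V z) + hdot z (dV z w)).
Proof.
have := is_cderive_hdot (is_cderive_line z w) (is_cderive_evf z w).
by rewrite addr_rscale0.
Qed.

Definition Wchart_cofactor k z : R[i] :=
  - 2%:R / nsq z ^+ d * nsq p *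
  (evf V z k / hdot z p - z k * hdot (evf V z) p / hdot z p ^+ 2).

Lemma Wchart_factor q k :
  Wchart d V p q k = hdot (p + q) (evf V (p + q)) * Wchart_cofactor k (p + q).
Proof. by rewrite /Wchart /Dpsi /Xfield hdotZl /rho /Wchart_cofactor; ring. Qed.

Hypothesis p_neq0 : nsq p != 0.

Lemma cderivable_Wchart_cofactor w k :
  cderivable 0 (fun s => Wchart_cofactor k (p + rscale s w)).
Proof.
have dz l : cderivable 0 (fun s => (p + rscale s w) l).
  by exists (w l); exact: is_cderive_line.
have dVz l : cderivable 0 (fun s => evf V (p + rscale s w) l).
  by exists (dV p w l); exact: is_cderive_evf.
have dp l : cderivable 0 (fun _ : R => p l) by exact: cderivable_cst.
have dzp := cderivable_hdot dz dp.
have nzp : hdot (p + rscale 0 w) p != 0 by rewrite addr_rscale0.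
apply: cderivableM.
  apply: cderivableM (cderivable_cst _ _); apply: cderivableM (cderivable_cst _ _) _.
  apply: cderivableV; first exact/cderivableX/cderivable_hdot.
  by rewrite addr_rscale0 expf_neq0.
apply: cderivableB.
  by apply: cderivableM (dVz k) _; exact: cderivableV.
apply: cderivableM; first exact/cderivableM/(cderivable_hdot dVz dp).
by apply: cderivableV; [exact: cderivableX | rewrite expf_neq0].
Qed.

Hypothesis pV0 : hdot p (evf V p) = 0.

(* Since (p + q).V(p + q) vanishes at q = 0, the product rule only needs the
   cofactor to be differentiable, not its derivative. *)
Lemma linW_chart w k :
  linW d V p w k = (hdot w (evf V p) + hdot p (dV p w)) * Wchart_cofactor k p.
Proof.
have [g dg] := cderivable_Wchart_cofactor w k.
have := is_cderiveM (is_cderive_hdot_evf p w) dg.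
rewrite addr_rscale0 pV0 mul0r addr0 => dW.
by apply: cderive_val; under eq_fun do rewrite Wchart_factor.
Qed.

Let Vp_dot_p : hdot (evf V p) p = 0.
Proof. by rewrite hdotC pV0 conjC0. Qed.

Lemma Wchart_cofactor_base k :
  Wchart_cofactor k p = - 2%:R / nsq p ^+ d * evf V p k.
Proof.
rewrite /Wchart_cofactor Vp_dot_p mulr0 mul0r subr0 -/(nsq p).
by field; rewrite p_neq0 expf_neq0.
Qed.

Lemma leaf_tangent_base : leaf_tangent V p = evf V p.
Proof.
apply/funext => k; rewrite /leaf_tangent /Dpsi Vp_dot_p mulr0 mul0r subr0 -/(nsq p).
by field.
Qed.

End Chart.

Section RealNorm.
Variable R : realType.
Local Notation Re := (@complex.Re R).
Local Notation Im := (@complex.Im R).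
Implicit Types (u : C3 R) (x : R).

Lemma rcE x : rc x = (x%:C)%C.
Proof. by []. Qed.

Definition nsqr u : R := \sum_(k < 3) (Re (u k) ^+ 2 + Im (u k) ^+ 2).

Lemma nsqE u : nsq u = rc (nsqr u).
Proof.
rewrite rcE /nsqr rmorph_sum; apply: eq_bigr => k _.
by case: (u k) => x y /=; congr Complex; ring.
Qed.

Lemma nsqr_gt0 u : ~ (forall k, u k = 0) -> 0 < nsqr u.
Proof.
move=> /existsNP[k /eqP uk_nz].
rewrite /nsqr (bigD1 k) //= ltr_pwDl ?sumr_ge0 // => [|i _]; last first.
  by rewrite addr_ge0 ?sqr_ge0.
by rewrite lt_def normc2_eq0 uk_nz addr_ge0 ?sqr_ge0.
Qed.

End RealNorm.

Lemma sgn_mul_neg_addsub (F : realDomainType) (c a r : F) :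
  c < 0 -> 0 < a -> 0 <= r ->
  [/\ c * (a + r) < 0, (c * (a - r) < 0) = (r < a) & (0 < c * (a - r)) = (a < r)].
Proof.
move=> c_lt0 a_gt0 r_ge0; rewrite !nmulr_rlt0 // nmulr_rgt0 // subr_gt0 subr_lt0.
by split=> //; exact: ltr_wpDr.
Qed.

Section Leaf.
Variable R : realType.
Local Notation Re := (@complex.Re R).
Local Notation Im := (@complex.Im R).
Variables (d : nat) (V : pvf R) (p : C3 R).
Hypotheses (p_nz : ~ (forall k, p k = 0)) (pV0 : hdot p (evf V p) = 0).
Hypothesis Vp_nz : ~ (forall k, evf V p k = 0).

Local Notation v := (evf V p).
Local Notation B := (hdot (DVV V p) p).
Local Notation c0 := (- 2%:R / nsqr p ^+ d).
Local Notation a := (nsqr v).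

Let p_neq0 : nsq p != 0.
Proof. by rewrite nsqE; apply/eqP => -[/eqP]; rewrite gt_eqF // nsqr_gt0. Qed.

Let rc_c0 : rc c0 = - 2%:R / nsq p ^+ d.
Proof.
by rewrite nsqE !rcE rmorphM rmorphN rmorph_nat fmorphV rmorphXn.
Qed.

Lemma linW_leaf c k :
  linW d V p (fun j => c * v j) k = rc c0 * (c * rc a + c^* * B^*) * v k.
Proof.
rewrite linW_chart // Wchart_cofactor_base // -rc_c0 hdotZl -nsqE.
have -> : dV V p (fun j => c * v j) = fun j => c * DVV V p j.
  by apply/funext => j; rewrite /dV /DVV mulr_sumr; apply: eq_bigr => l _; rewrite mulrA.
by rewrite hdotZr -hdotC /nsq; ring.
Qed.

Lemma leaf_linearizationE M :
  leaf_linearization d V p M <->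
  [/\ M 0 0 = c0 * (a + Re B), M 1 0 = - (c0 * Im B),
      M 0 1 = - (c0 * Im B) & M 1 1 = c0 * (a - Re B)].
Proof.
have [k0 /eqP vk0] := (existsNP _).2 Vp_nz.
have entries w L x y : (forall k, linW d V p w k = L * v k) ->
    (forall k, linW d V p w k = rc x * v k + rc y * ('i * v k)) <-> x = Re L /\ y = Im L.
  have e k : rc x * v k + rc y * ('i * v k) = Complex x y * v k.
    by case: (v k) => ? ? /=; congr Complex; ring.
  move=> linL; split => [/(_ k0) | [ex ey] k]; rewrite linL e; last by rewrite ex ey; case: (L).
  by move/(mulIf vk0) => ->.
have lin1 k : linW d V p v k = rc c0 * (rc a + B^*) * v k.
  by have := linW_leaf 1 k; rewrite (funext (fun k => mul1r (v k))) conjC1 !mul1r.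
rewrite /leaf_linearization leaf_tangent_base //=.
rewrite (entries _ _ _ _ lin1) (entries _ _ _ _ (linW_leaf 'i)).
case: B => x y /=; split=> [[[-> ->] [-> ->]] | [-> -> -> ->]].
  by split; ring.
by split; split; ring.
Qed.

Local Notation r := (Num.sqrt (Re B ^+ 2 + Im B ^+ 2)).

Lemma leaf_spectrum M : leaf_linearization d V p M ->
  forall l, eigenvalue (cmx M) l <-> l = rc (c0 * (a + r)) \/ l = rc (c0 * (a - r)).
Proof.
move=> /leaf_linearizationE[e00 e10 e01 e11].
apply: eigenvalue_cmx22; rewrite ?e00 ?e10 ?e01 ?e11; first by ring.
have r2 : r ^+ 2 = Re B ^+ 2 + Im B ^+ 2 by rewrite sqr_sqrtr // addr_ge0 ?sqr_ge0.
by transitivity (c0 ^+ 2 * (a ^+ 2 - r ^+ 2)); [rewrite r2 | ]; ring.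
Qed.

Lemma leaf_linearization_exP (P : 'M[R]_2 -> Prop) (Q : Prop) :
  (forall M, leaf_linearization d V p M -> (P M <-> Q)) ->
  (exists M, leaf_linearization d V p M /\ P M) <-> Q.
Proof.
move=> PQ; split=> [[M [linM PM]] | q]; first by apply/(PQ M).
pose M : 'M[R]_2 := \matrix_(i < 2, j < 2)
  if i == 0 then (if j == 0 then c0 * (a + Re B) else - (c0 * Im B))
  else (if j == 0 then - (c0 * Im B) else c0 * (a - Re B)).
have linM : leaf_linearization d V p M by apply/leaf_linearizationE; rewrite !mxE.
by exists M; split; last exact/(PQ M).
Qed.

Let c0_lt0 : c0 < 0.
Proof. by rewrite mulNr oppr_lt0 divr_gt0 // exprn_gt0 // nsqr_gt0. Qed.

Let a_gt0 : 0 < a. Proof. exact: nsqr_gt0. Qed.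

Let signs := sgn_mul_neg_addsub c0_lt0 a_gt0 (sqrtr_ge0 (Re B ^+ 2 + Im B ^+ 2)).

Lemma leaf_sinkE : leaf_sink d V p <-> r < a.
Proof.
apply: leaf_linearization_exP => M /leaf_spectrum/is_sink_mxE ->.
by case: signs => plus_lt0 -> _; split=> [[] | ->].
Qed.

Lemma leaf_saddleE : leaf_saddle d V p <-> a < r.
Proof.
apply: leaf_linearization_exP => M /leaf_spectrum/is_saddle_mxE ->.
case: signs => plus_lt0 _ ->; rewrite plus_lt0 (lt_gtF plus_lt0) andbF.
by split=> [[] // | ->]; left.
Qed.

Lemma not_leaf_source : ~ leaf_source d V p.
Proof.
move=> [M [/leaf_spectrum/is_source_mxE -> []]].
by case: signs => plus_lt0 _ _; rewrite (lt_gtF plus_lt0).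
Qed.

End Leaf.

Unset Implicit Arguments.

Theorem mainTheorem13 (R : realType) (d : nat) (V : pvf R) (p : C3 R) :
  homogeneous_vf d V ->
  divergence_free V ->
  nonvanishing_off0 V ->
  ~ (forall k, p k = 0) ->
  hdot p (evf V p) = 0 ->
  (leaf_sink d V p <-> `|hdot (DVV V p) p| < nsq (evf V p)) /\
  (leaf_saddle d V p <-> nsq (evf V p) < `|hdot (DVV V p) p|) /\
  ~ leaf_source d V p.
Proof.
move=> _ _ V_nz p_nz pV0; have Vp_nz := V_nz p p_nz.
rewrite normc_def nsqE !ltcR.
split; first exact: leaf_sinkE.
by split; [exact: leaf_saddleE | exact: not_leaf_source].
Qed.
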